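(* Let $G$ be a pseudoforest and let $\tau=\tau_A$, $A=\binom{a\ b}{c\ d}$, be a nontrivial 2-switch on $G$. Suppose that either (i) $ab\in E(\operatorname{Forest}(G))$ and $cd\in E(\operatorname{Cycles}(G))$, or (ii) $ab,cd\in E(\operatorname{Cycles}(G))$. Then $\tau$ is a p-switch over $G$.
   Context: Graphs are finite, simple, undirected, labeled. A unicyclic graph is a connected graph with exactly one cycle; a pseudoforest is a graph each of whose components is a tree or a unicyclic graph. For vertices $a,b,c,d$, $A=\binom{a\ b}{c\ d}$ is interchangeable in $G$ if $ab,cd\in E(G)$, $\{a,b\}\cap\{c,d\}=\varnothing$, $ac,bd\notin E(G)$; the 2-switch $\tau_A$ sends $G$ to $G-ab-cd+ac+bd$ if $A$ is interchangeable and to $G$ otherwise (trivial). A nontrivial 2-switch $\tau$ over a pseudoforest $G$ is a p-switch if $\tau(G)$ is a pseudoforest. $\operatorname{Cycles}(H)$ is the subgraph induced by vertices lying on some cycle of $H$; $\operatorname{Forest}(H)=H-E(\operatorname{Cycles}(H))$. *)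

(* A finite simple labeled graph on vertex set T is a
   symmetric, irreflexive relation G : rel T. *)
From mathcomp Require Import all_boot.
From mathcomp Require Export all_boot.
Set Implicit Arguments. Unset Strict Implicit. Unset Printing Implicit Defensive.

Section Graphs.
Variable T : finType.
Implicit Types (G : rel T) (x y a b u v : T).

Definition simple_graph G := symmetric G /\ irreflexive G.

Definition same_pair x y u v : bool :=
  ((x == u) && (y == v)) || ((x == v) && (y == u)).

Definition is_cycle G (c : seq T) : bool := [&& uniq c, 3 <= size c & path.cycle G c].

(* Edge set of the cycle c (as a symmetric set of ordered pairs). *)
Definition cycle_edges (c : seq T) : {set T * T} :=
  [set p : T * T | ((p.1 \in c) && (next c p.1 == p.2))
                || ((p.2 \in c) && (next c p.2 == p.1))].

(* Pseudoforest: every connected component is a tree or unicyclic, i.e.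
   contains at most one cycle (cycles compared as subgraphs, via edge sets). *)
Definition pseudoforest G : Prop :=
  forall c1 c2 : seq T, is_cycle G c1 -> is_cycle G c2 ->
    (exists x y, [/\ x \in c1, y \in c2 & connect G x y]) ->
    cycle_edges c1 = cycle_edges c2.

Definition on_cycle G x : Prop := exists c, is_cycle G c /\ x \in c.

(* xy is an edge of Cycles(G) (induced subgraph on vertices lying on cycles) *)
Definition cycles_edge G x y : Prop := G x y /\ on_cycle G x /\ on_cycle G y.

Definition forest_edge G x y : Prop := G x y /\ ~ cycles_edge G x y.

Definition interchangeable G a b (c d : T) : bool :=
  [&& G a b, G c d, a != c, a != d, b != c, b != d, ~~ G a c & ~~ G b d].

Definition two_switch G a b (c d : T) : rel T :=
  if interchangeable G a b c d then
    fun x y => (G x y && ~~ same_pair x y a b && ~~ same_pair x y c d)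
               || same_pair x y a c || same_pair x y b d
  else G.

Definition p_switch G a b (c d : T) : Prop :=
  interchangeable G a b c d /\ pseudoforest (two_switch G a b c d).

End Graphs.

(* A simple graph is a pseudoforest exactly when it has an orientation in
   which every vertex has out-degree at most one.  In one direction, the
   recurrent vertices reachable from a vertex do not change along an edge, and
   from a vertex of a cycle they are that cycle, so connected cycles coincide.
   Conversely, delete an edge uv lying on the cycle of its component, orient
   the rest by induction, reverse the walk from u to the sink it reaches, and
   orient uv away from u.

   For the 2-switch, orient G with c -> d; since cd lies on a cycle, the walk
   from d returns to c.  Delete ab and cd.  If ab was oriented b -> a, then b
   and c are sinks.  Otherwise a and c are sinks, the walk from d now stops at
   one of them, and reversing that walk makes d a sink while the other one of
   a, c stays a sink.  Either way ac and bd can be oriented away from a sink,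
   which orients tau(G) with out-degree at most one.  Only the hypothesis that
   cd is an edge of Cycles(G) is used. *)

From Stdlib Require Import Classical.
From mathcomp Require Import all_boot.
Set Implicit Arguments. Unset Strict Implicit. Unset Printing Implicit Defensive.

Section Orbits.
Variable T : finType.
Implicit Types (f g : T -> T) (p : seq T) (x y z w s : T).

Definition recurrent f x := fconnect f (f x) x.

Lemma fconnect_homo f (P : pred T) x y :
  {homo f : z / P z} -> fconnect f x y -> P x -> P y.
Proof. by move=> fP /iter_findex <-; elim: findex => //= n IHn /IHn /fP. Qed.

Lemma fconnect_fixed f x y : f x = x -> fconnect f x y -> y = x.
Proof.
move=> fx xy; have fP : {homo f : z / z == x} by move=> z /eqP->; rewrite fx.
exact/eqP/(fconnect_homo fP xy).
Qed.

Lemma fconnect_fixed_uniq f x y s :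
  f y = y -> f s = s -> fconnect f x y -> fconnect f x s -> y = s.
Proof.
move=> fy fs /iter_findex ys /iter_findex ss; move: ys ss fy fs.
move: (findex f x y) (findex f x s) => i j <- <- fi fj.
case: (leqP i j) => [/subnK|/ltnW/subnK] <-; rewrite iterD.
  by rewrite [RHS]iter_fix.
by rewrite [LHS]iter_fix.
Qed.

Lemma fconnect_step f x y : fconnect f x y -> y = x \/ fconnect f (f x) y.
Proof.
move/iter_findex; case: findex => [|k] <-; [by left | right].
by rewrite iterSr; apply: fconnect_iter.
Qed.

Lemma recurrent_fconnect1 f x w :
  recurrent f w -> fconnect f (f x) w = fconnect f x w.
Proof.
move=> rw; apply/idP/idP; first exact/connect_trans/fconnect1.
by case/fconnect_step => [wx|//]; rewrite -wx.
Qed.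

Lemma recurrent_fcycle_orbit f x : recurrent f x -> fcycle f (orbit f x).
Proof.
move/iter_findex; set n := findex _ _ _ => fnx.
have cyc : fcycle f (x :: traject f (f x) n).
  rewrite /=; have -> : rcons (traject f (f x) n) x = traject f (f x) n.+1.
    by rewrite trajectSr fnx.
  exact: fpath_traject.
by rewrite -(undup_cycle_cons cyc); apply: fcycle_undup.
Qed.

Lemma recurrent_fconnect_sym f x y :
  recurrent f x -> fconnect f x y -> fconnect f y x.
Proof.
move=> /recurrent_fcycle_orbit fc; rewrite fconnect_orbit => yx.
by rewrite (fconnect_cycle fc yx) in_orbit.
Qed.

Lemma fcycle_fconnect_recurrent f p z w : fcycle f p -> z \in p ->
  fconnect f z w && recurrent f w = (w \in p).
Proof.
move=> fp zp; rewrite (fconnect_cycle fp zp).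
have [wp|//] := boolP (w \in p).
by rewrite /recurrent (fconnect_cycle fp (mem_fcycle fp wp)).
Qed.

Lemma fconnect_stop_fixed f g x y : (forall z, g z = f z \/ g z = z) ->
  g y = y -> fconnect f x y -> exists2 s, g s = s & fconnect g x s.
Proof.
move=> gf gy /iter_findex; move: (findex f x y) => n.
elim: n x => [x /= ->|n IHn x]; first by exists y.
rewrite iterSr; case: (gf x) => gx; last by exists x.
case/IHn=> s gs xs; exists s => //.
by apply: connect_trans (fconnect1 g x) _; rewrite gx.
Qed.

End Orbits.

Section Cycles.
Variable T : finType.
Implicit Types (G : rel T) (c : seq T) (x y u v : T).

Lemma next_next_neq c x : uniq c -> 2 < size c -> x \in c -> next c (next c x) != x.
Proof.
move=> Uc Sc /rot_to[i q Hq]; rewrite -!(next_rot i Uc) Hq.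
have : uniq (x :: q) by rewrite -Hq rot_uniq.
have : 1 < size q by rewrite -ltnS -/(size (x :: q)) -Hq size_rot.
case: q {Hq} => [|y [|z r]] //= _; rewrite !inE !negb_or eqxx.
by case/and4P=> /and3P[xy xz _] _ _ _; rewrite (eq_sym y x) (negbTE xy) eqxx eq_sym.
Qed.

Lemma cycle_edges_rev c : uniq c -> cycle_edges (rev c) = cycle_edges c.
Proof.
move=> Uc; have prevE x y : (x \in c) && (prev c x == y) = (y \in c) && (next c y == x).
  apply/andP/andP => [[xc /eqP<-]|[yc /eqP<-]];
    by rewrite ?mem_prev ?mem_next ?next_prev ?prev_next.
by apply/setP => -[x y]; rewrite !inE /= !mem_rev !next_rev // !prevE orbC.
Qed.

Lemma cycle_edges_fcycle (f : T -> T) p q : fcycle f p -> fcycle f q -> p =i q ->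
  cycle_edges p = cycle_edges q.
Proof.
move=> fp fq pq; have npq z : z \in p -> next p z = next q z.
  by move=> zp; rewrite (nextE fp zp) (nextE fq) // -pq.
apply/setP => -[x y]; rewrite !inE /= -!pq.
by case: (boolP (x \in p)) => xp; case: (boolP (y \in p)) => yp //=; rewrite ?npq.
Qed.

Lemma cycle_edges_edge G c x y : symmetric G -> is_cycle G c ->
  (x, y) \in cycle_edges c -> G x y.
Proof.
move=> sG /and3P[_ _ Gc]; rewrite inE /= => /orP[]/andP[zc /eqP<-].
  exact: next_cycle Gc zc.
by rewrite sG; apply: next_cycle Gc zc.
Qed.

Lemma sub_is_cycle G G' c : subrel G G' -> is_cycle G c -> is_cycle G' c.
Proof. by move=> GG' /and3P[Uc Sc Gc]; rewrite /is_cycle Uc Sc (sub_cycle GG'). Qed.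

Lemma pseudoforest_sub G G' : subrel G' G -> pseudoforest G -> pseudoforest G'.
Proof.
move=> G'G PG c1 c2 C1 C2 [x [y [xc1 yc2 xy]]].
apply: PG (sub_is_cycle G'G C1) (sub_is_cycle G'G C2) _; exists x, y; split=> //.
by apply: connect_sub xy => u v /G'G /connect1.
Qed.

Lemma pseudoforest_edge_on_cycles G u0 v0 : pseudoforest G -> G u0 v0 ->
  exists u v, G u v /\ forall c z, is_cycle G c -> z \in c -> connect G u z ->
    (u, v) \in cycle_edges c.
Proof.
move=> PG Guv0; have [[c0 C0]|noC] := classic (exists c, is_cycle G c); last first.
  by exists u0, v0; split=> // c z C; case: noC; exists c.
case: c0 C0 => [|u q] C0; first by case/and3P: C0.
have uc0 := mem_head u q.
exists u, (next (u :: q) u); split; first by case/and3P: C0 => _ _ /next_cycle; apply.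
move=> c z C zc uz; rewrite -(PG _ _ C0 C); last by exists u, z.
by rewrite inE /= uc0 eqxx.
Qed.

End Cycles.

Section Orientations.
Variable T : finType.
Implicit Types (G : rel T) (h : T -> T) (c : seq T) (x y z u v w s : T).

(* [h] is the successor map of the orientation: [x -> h x] is an arc unless
   [h x = x], and the last clause forbids orienting an edge both ways. *)
Definition orientation G h : Prop :=
  [/\ forall x, h x != x -> G x (h x),
      forall x y, G x y -> h x = y \/ h y = x
    & forall x y, h x = y -> h y = x -> x = y].

Definition del_edge G u v : rel T := fun x y => G x y && ~~ same_pair x y u v.
Definition add_edge G u v : rel T := fun x y => G x y || same_pair x y u v.

Lemma same_pairxx u v : same_pair u v u v.
Proof. by rewrite /same_pair !eqxx. Qed.

Lemma same_pairC x y u v : same_pair x y u v = same_pair y x u v.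
Proof. by rewrite /same_pair orbC; congr orb; apply: andbC. Qed.

Lemma same_pairCr x y u v : same_pair x y u v = same_pair x y v u.
Proof. by rewrite /same_pair orbC. Qed.

Lemma same_pairP x y u v :
  reflect ((x, y) = (u, v) \/ (x, y) = (v, u)) (same_pair x y u v).
Proof.
by apply: (iffP orP) => [[]/andP[/eqP-> /eqP->]|[][-> ->]]; [left|right|left|right]; rewrite ?eqxx.
Qed.

Lemma eq_orientation G G' h : G =2 G' -> orientation G h -> orientation G' h.
Proof.
move=> GG' [arc cover digon]; split=> // [x|x y]; rewrite -GG'; [exact: arc | exact: cover].
Qed.

Lemma simple_del_edge G u v : simple_graph G -> simple_graph (del_edge G u v).
Proof.
by case=> sG irrG; split=> [x y|x]; rewrite /del_edge ?irrG // sG same_pairC.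
Qed.

Lemma simple_add_edge G u v : simple_graph G -> u != v -> simple_graph (add_edge G u v).
Proof.
case=> sG irrG uv; split=> [x y|x]; rewrite /add_edge; first by rewrite sG same_pairC.
rewrite irrG /=.
by apply/same_pairP => -[][xu xv]; move: uv; rewrite -xu -xv eqxx.
Qed.

Lemma add_del_edge G u v : symmetric G -> G u v -> add_edge (del_edge G u v) u v =2 G.
Proof.
move=> sG Guv x y; rewrite /add_edge /del_edge.
by case: same_pairP => [[][-> ->]|_]; rewrite ?andbT ?orbT ?orbF // sG.
Qed.

Lemma orientation_del_edge G h x y :
  orientation G h -> h x = y -> orientation (del_edge G x y) [eta h with x |-> x].
Proof.
move=> [arc cover digon] hx; split=> [z|z w|z w] /=.
- case: (eqVneq z x) => [->|zx]; first by rewrite eqxx.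
  move=> hz; rewrite /del_edge arc //=.
  apply/same_pairP => -[[zx' _]|[zy hzx]]; first by rewrite zx' eqxx in zx.
  by move: zx; rewrite zy (digon _ _ hx) ?eqxx // -zy.
- case/andP=> Gzw nzw; case: (cover _ _ Gzw) => [hz|hw]; [left|right].
    by case: (eqVneq z x) => [zx|//]; move: nzw; rewrite -hz zx hx same_pairxx.
  by case: (eqVneq w x) => [wx|//]; move: nzw; rewrite -hw wx hx same_pairC same_pairxx.
- case: (eqVneq z x) => [->|zx]; first by move=> ->.
  case: (eqVneq w x) => [_ _ xz|_]; last exact: digon.
  by rewrite xz eqxx in zx.
Qed.

Lemma orientation_add_edge G h x y : simple_graph G -> orientation G h ->
  h x = x -> x != y -> ~~ G x y -> orientation (add_edge G x y) [eta h with x |-> y].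
Proof.
move=> [sG irrG] [arc cover digon] hx xy nGxy; split=> [z|z w|z w] /=.
- case: (eqVneq z x) => [->|zx hz]; first by rewrite /add_edge same_pairxx orbT.
  by rewrite /add_edge arc.
- case/orP=> [Gzw|/same_pairP[[-> ->]|[-> ->]]]; [|by left; rewrite eqxx|by right; rewrite eqxx].
  case: (cover _ _ Gzw) => [hz|hw]; [left|right].
    by case: (eqVneq z x) => [zx|//]; move: Gzw; rewrite -hz zx hx irrG.
  by case: (eqVneq w x) => [wx|//]; move: Gzw; rewrite -hw wx hx irrG.
- case: (eqVneq z x) => [-> <-|zx].
    rewrite eq_sym (negbTE xy) => hy; case/negP: nGxy.
    by rewrite sG -hy arc // hy.
  case: (eqVneq w x) => [-> hz yz|_]; last exact: digon.
  by case/negP: nGxy; rewrite sG yz -hz arc // hz eq_sym.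
Qed.

Lemma orientation_reverse_arc G h u : simple_graph G -> orientation G h ->
  h u != u -> h (h u) = h u -> orientation G [eta [eta h with u |-> u] with h u |-> u].
Proof.
move=> sGG Oh hu hhu; have [[sG _] [arc _ _]] := (sGG, Oh).
have Ov := orientation_del_edge Oh (erefl (h u)).
have := orientation_add_edge (x := h u) (y := u) (simple_del_edge u (h u) sGG) Ov.
rewrite /= (negbTE hu) hhu /del_edge same_pairC same_pairxx andbF => /(_ erefl isT isT).
apply: eq_orientation => x y; rewrite /add_edge [same_pair x y (h u) u]same_pairCr.
exact: add_del_edge sG (arc u hu) x y.
Qed.

Lemma orientation_add_edge_sink G h x y : simple_graph G -> orientation G h ->
  h x = x \/ h y = y -> x != y -> ~~ G x y ->
  exists2 h', orientation (add_edge G x y) h' & forall z, z != x -> z != y -> h' z = h z.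
Proof.
move=> sGG Oh [hx|hy] xy nGxy.
  exists [eta h with x |-> y]; first exact: orientation_add_edge.
  by move=> z zx _ /=; rewrite (negbTE zx).
exists [eta h with y |-> x]; last by move=> z _ zy /=; rewrite (negbTE zy).
have [sG _] := sGG; rewrite eq_sym sG in xy nGxy.
apply: eq_orientation (orientation_add_edge sGG Oh hy xy nGxy) => z w.
by rewrite /add_edge same_pairCr.
Qed.

Lemma orientation_reverse_path G h u s : simple_graph G -> orientation G h ->
  h s = s -> fconnect h u s ->
  exists h', [/\ orientation G h', h' u = u & forall x, ~~ fconnect h u x -> h' x = h x].
Proof.
move=> sGG Oh hs /iter_findex; move: (findex h u s) => n.
elim: n u => [u /= us|n IHn u]; first by exists h; split; rewrite // us.
rewrite iterSr => hus; have [hu|hu] := eqVneq (h u) u; first by exists h.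
have us : fconnect h u s by rewrite -hus -iterSr; apply: fconnect_iter.
have nreach : ~~ fconnect h (h u) u.
  apply/negP => /recurrent_fconnect_sym/(_ us) su.
  by move: hu; rewrite (fconnect_fixed hs su) hs eqxx.
have [h1 [O1 h1hu h1E]] := IHn _ hus; have h1u : h1 u = h u := h1E _ nreach.
exists [eta [eta h1 with u |-> u] with h u |-> u]; split.
- by move: (orientation_reverse_arc (u := u) sGG O1); rewrite h1u h1hu; apply.
- by rewrite /= eq_sym (negbTE hu) eqxx.
- move=> x ux; have xu : x != u by apply: contraNneq ux => ->; apply: connect0.
  have xhu : x != h u by apply: contraNneq ux => ->; apply: fconnect1.
  rewrite /= (negbTE xu) (negbTE xhu) h1E //; apply: contra ux.
  exact: connect_trans (fconnect1 h u).
Qed.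

Lemma orientation_connect G h x y : orientation G h -> fconnect h x y -> connect G x y.
Proof.
move=> [arc _ _]; apply: connect_sub => z _ /eqP <-.
by have [->|hz] := eqVneq (h z) z; [apply: connect0 | apply/connect1/arc].
Qed.

Lemma orientation_orbit_cycle G h z :
  orientation G h -> h z != z -> recurrent h z -> is_cycle G (orbit h z).
Proof.
move=> [arc _ digon] hz rz; have fc := recurrent_fcycle_orbit rz.
have hy y : y \in orbit h z -> h y != y.
  rewrite -fconnect_orbit => zy; apply: contraNneq hz => hyy.
  by rewrite (fconnect_fixed hyy (recurrent_fconnect_sym rz zy)) hyy.
have size_gt2 : 2 < size (orbit h z).
  move: fc (orbit_uniq h z) hy (in_orbit h z).
  case: (orbit h z) => [|x [|y [|w q]]] //=.
    by move=> /andP[/eqP hx _] _ /(_ x (mem_head _ _)); rewrite hx eqxx.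
  by move=> /and3P[/eqP hx /eqP hyx _]; rewrite (digon _ _ hx hyx) inE eqxx.
rewrite /is_cycle orbit_uniq size_gt2 /=.
apply: (sub_in_cycle _ (allss (orbit h z)) fc) => x y xo _ /eqP <-.
exact/arc/hy.
Qed.

Lemma orientation_sink_or_cycle G h x : orientation G h ->
  (exists2 s, h s = s & fconnect h x s) \/
  (exists c z, [/\ is_cycle G c, z \in c & connect G x z]).
Proof.
move=> Oh; have /trajectP[i lt_i iE] := looping_order h x.
set z := iter i h x in iE; have xz : fconnect h x z := fconnect_iter h i x.
have [hz|hz] := eqVneq (h z) z; [by left; exists z | right].
have rz : recurrent h z.
  move: iE; rewrite -(subnK (ltnW lt_i)) iterD -/z.
  have : 0 < order h x - i by rewrite subn_gt0.
  case: (order h x - i) => [//|k] _; rewrite iterSr => kz.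
  by rewrite /recurrent -{2}kz; apply: fconnect_iter.
exists (orbit h z), z; split; [exact: orientation_orbit_cycle | exact: in_orbit |].
exact: orientation_connect Oh xz.
Qed.

Lemma orientation_fcycle G h c : orientation G h -> is_cycle G c ->
  exists c', [/\ fcycle h c', c' =i c & cycle_edges c' = cycle_edges c].
Proof.
move=> [_ cover _] /and3P[Uc Sc Gc].
have [/allP fwd|/allPn[x0 x0c /= nfwd0]] := boolP (all (fun x => h x == next c x) c).
  by exists c; split=> //; apply: (cycle_from_next Uc) => x /fwd.
have homo : {homo next c : x / (x \in c) && (h x != next c x)}.
  move=> x /andP[xc hx]; rewrite mem_next xc /=.
  case: (cover _ _ (next_cycle Gc xc)) => [/eqP hx'|->]; first by rewrite hx' in hx.
  by rewrite eq_sym next_next_neq.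
have bwd x : x \in c -> h x != next c x.
  move=> xc; have x0x : fconnect (next c) x0 x.
    by rewrite (fconnect_cycle (cycle_next Uc) x0c).
  by have := fconnect_homo homo x0x; rewrite x0c nfwd0 => /(_ isT) /andP[].
exists (rev c); split; [|by move=> x; rewrite mem_rev | exact: cycle_edges_rev].
apply: (cycle_from_next (p := rev c)); first by rewrite rev_uniq.
move=> x; rewrite mem_rev next_rev // => xc.
case: (cover _ _ (prev_cycle Gc xc)) => [hp|/eqP //].
by have := bwd (prev c x); rewrite mem_prev hp next_prev // eqxx => /(_ xc).
Qed.

Lemma orientation_recurrent G h c x :
  orientation G h -> is_cycle G c -> x \in c -> recurrent h x.
Proof.
move=> Oh C xc; have [c' [fc' c'c _]] := orientation_fcycle Oh C.
have xc' : x \in c' by rewrite c'c.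
by rewrite /recurrent (fconnect_cycle fc' (mem_fcycle fc' xc')).
Qed.

Lemma orientation_pseudoforest G h : orientation G h -> pseudoforest G.
Proof.
move=> Oh c1 c2 C1 C2 [x [y [xc1 yc2 xy]]].
have [c1' [fc1 c1E e1]] := orientation_fcycle Oh C1.
have [c2' [fc2 c2E e2]] := orientation_fcycle Oh C2.
suff c12 : c1' =i c2' by rewrite -e1 -e2 (cycle_edges_fcycle fc1 fc2 c12).
move=> w.
pose reach := [pred z | fconnect h z w && recurrent h w].
have reach_closed : closed G reach.
  move=> z z' Gzz'; rewrite !inE; have [rw|] := boolP (recurrent h w); last by rewrite !andbF.
  by have [_ cover _] := Oh; case: (cover _ _ Gzz') => <-; rewrite recurrent_fconnect1.
have r1 : (x \in reach) = (w \in c1').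
  by rewrite inE (fcycle_fconnect_recurrent _ fc1) // c1E.
have r2 : (y \in reach) = (w \in c2').
  by rewrite inE (fcycle_fconnect_recurrent _ fc2) // c2E.
by rewrite -r1 -r2; apply: closed_connect reach_closed _ _ xy.
Qed.

Lemma pseudoforest_orientation G : simple_graph G -> pseudoforest G ->
  exists h, orientation G h.
Proof.
have [n] := ubnP #|[set p : T * T | G p.1 p.2]|; elim: n G => // n IHn G ltE sGG PG.
have [sG irrG] := sGG.
case: (pickP (fun p : T * T => G p.1 p.2)) => [[u0 v0] /= Guv0|noE]; last first.
  exists id; split=> [x|x y Gxy|x y /= -> //]; first by rewrite eqxx.
  by have := noE (x, y); rewrite /= Gxy.
have [u [v [Guv onC]]] := pseudoforest_edge_on_cycles PG Guv0.
have uv : u != v by apply: contraTneq Guv => ->; rewrite irrG.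
pose G' := del_edge G u v; have sG'G' : simple_graph G' := simple_del_edge u v sGG.
have G'G : subrel G' G by move=> x y /andP[].
have nG'uv : ~~ G' u v by rewrite /G' /del_edge same_pairxx andbF.
have [h' Oh'] : exists h', orientation G' h'.
  apply: IHn sG'G' (pseudoforest_sub G'G PG).
  rewrite -ltnS; apply: leq_trans ltE; rewrite ltnS.
  apply: proper_card; apply/properP; split; first by apply/subsetP => p; rewrite !inE => /G'G.
  by exists (u, v); rewrite !inE.
have [[s hs us] | [c [z [Cc zc uz]]]] := orientation_sink_or_cycle u Oh'; last first.
  (* a cycle of G' reachable from u is a cycle of G avoiding uv *)
  have G'c : is_cycle G c := sub_is_cycle G'G Cc.
  have uz' : connect G u z by apply: connect_sub uz => x y /G'G /connect1.
  by case/negP: nG'uv; apply: cycle_edges_edge sG'G'.1 Cc (onC _ _ G'c zc uz').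
have [h'' [Oh'' h''u _]] := orientation_reverse_path sG'G' Oh' hs us.
exists [eta h'' with u |-> v]; apply: eq_orientation (add_del_edge sG Guv) _.
exact: orientation_add_edge.
Qed.

End Orientations.

Section TwoSwitch.
Variable T : finType.
Implicit Types (G : rel T) (h : T -> T) (a b c d : T).

Lemma two_switch_edges G a b c d : interchangeable G a b c d ->
  two_switch G a b c d = add_edge (add_edge (del_edge (del_edge G a b) c d) a c) b d.
Proof. by rewrite /two_switch => ->. Qed.

Lemma interchangeable_swap G a b c d : symmetric G ->
  interchangeable G a b c d -> interchangeable G b a d c.
Proof.
move=> sG /and4P[Gab Gcd ac /and4P[ad bc bd /andP[nac nbd]]].
by rewrite /interchangeable sG Gab sG Gcd bd bc ad ac nbd nac.
Qed.

Lemma two_switch_swap G a b c d : symmetric G -> interchangeable G a b c d ->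
  two_switch G b a d c =2 two_switch G a b c d.
Proof.
move=> sG intA x y; rewrite /two_switch intA (interchangeable_swap sG intA).
rewrite (same_pairCr x y b a) (same_pairCr x y d c).
by case: (same_pair x y a c); case: (same_pair x y b d); rewrite ?orbT ?orbF.
Qed.

Lemma orientation_two_switch G h a b c d : simple_graph G -> interchangeable G a b c d ->
  orientation (del_edge (del_edge G a b) c d) h ->
  h a = a \/ h c = c -> h b = b \/ h d = d ->
  exists h', orientation (two_switch G a b c d) h'.
Proof.
move=> sGG intA Oh sink_ac sink_bd; have := intA.
case/and4P=> Gab Gcd ac /and4P[ad bc bd /andP[nGac nGbd]].
have [_ irrG] := sGG; have ab : a != b by apply: contraTneq Gab => ->; rewrite irrG.
have cd : c != d by apply: contraTneq Gcd => ->; rewrite irrG.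
have sD := simple_del_edge c d (simple_del_edge a b sGG).
have nDac : ~~ del_edge (del_edge G a b) c d a c by rewrite /del_edge (negbTE nGac).
have [h1 O1 h1E] := orientation_add_edge_sink sD Oh sink_ac ac nDac.
have sink_bd1 : h1 b = b \/ h1 d = d by rewrite !h1E // 1?eq_sym.
have nD'bd : ~~ add_edge (del_edge (del_edge G a b) c d) a c b d.
  rewrite /add_edge /del_edge (negbTE nGbd) /=.
  by apply/same_pairP => -[][bE _]; [rewrite bE eqxx in ab | rewrite bE eqxx in bc].
have [h2 O2 _] := orientation_add_edge_sink (simple_add_edge sD ac) O1 sink_bd1 bd nD'bd.
by exists h2; rewrite two_switch_edges.
Qed.

Lemma two_switch_sinks G h a b c d : simple_graph G -> orientation G h ->
  interchangeable G a b c d -> h c = d -> recurrent h c ->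
  exists h', [/\ orientation (del_edge (del_edge G a b) c d) h',
                 h' a = a \/ h' c = c & h' b = b \/ h' d = d].
Proof.
move=> sGG Oh intA hc rc; have := intA; case/and4P=> Gab Gcd ac /and4P[ad bc bd _].
have [_ cover _] := Oh; have sD := simple_del_edge c d (simple_del_edge a b sGG).
case: (cover _ _ Gab) => [ha|hb]; last first.
  have O1 : orientation (del_edge G a b) [eta h with b |-> b].
    apply: eq_orientation (orientation_del_edge Oh hb) => x y.
    by rewrite /del_edge same_pairCr.
  exists [eta [eta h with b |-> b] with c |-> c]; split; [|right|left].
  - by apply: orientation_del_edge O1 _; rewrite /= eq_sym (negbTE bc).
  - by rewrite /= eqxx.
  - by rewrite /= (negbTE bc) eqxx.
set h2 := [eta [eta h with a |-> a] with c |-> c].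
have O2 : orientation (del_edge (del_edge G a b) c d) h2.
  by apply: orientation_del_edge (orientation_del_edge Oh ha) _; rewrite /= eq_sym (negbTE ac).
have h2_stop z : h2 z = h z \/ h2 z = z.
  by rewrite /h2 /=; case: eqP => [->|_]; [right | case: eqP => [->|_]; [right|left]].
have h2c : h2 c = c by rewrite /h2 /= eqxx.
have h2a : h2 a = a by rewrite /h2 /= (negbTE ac) eqxx.
rewrite /recurrent hc in rc; have [s h2s ds] := fconnect_stop_fixed h2_stop h2c rc.
have [h3 [O3 h3d h3E]] := orientation_reverse_path sD O2 h2s ds.
have keep x : h2 x = x -> x != s -> h3 x = x.
  move=> h2x xs; rewrite h3E //; apply: contra xs => dx.
  by apply/eqP; apply: fconnect_fixed_uniq h2x h2s dx ds.
exists h3; split=> //; last by right.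
have [sa|sa] := eqVneq s a; [right; apply: keep => // | left; apply: keep => //].
  by rewrite sa eq_sym.
by rewrite eq_sym.
Qed.

End TwoSwitch.

Theorem lemma4p5 (T : finType) (G : rel T) (a b c d : T) :
  simple_graph G -> pseudoforest G ->
  interchangeable G a b c d ->
  ((forest_edge G a b /\ cycles_edge G c d) \/
   (cycles_edge G a b /\ cycles_edge G c d)) ->
  p_switch G a b c d.
Proof.
move=> sGG PG intA Hcd; split=> //.
have [Gcd [[c1 [C1 cc1]] [c2 [C2 dc2]]]] : cycles_edge G c d by case: Hcd => -[].
have [h Oh] := pseudoforest_orientation sGG PG.
suff [h' Oh'] : exists h', orientation (two_switch G a b c d) h'.
  exact: orientation_pseudoforest Oh'.
have [_ cover _] := Oh; case: (cover _ _ Gcd) => [hc|hd].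
  have [h1 [O1 sink_ac sink_bd]] :=
    two_switch_sinks sGG Oh intA hc (orientation_recurrent Oh C1 cc1).
  exact: orientation_two_switch sGG intA O1 sink_ac sink_bd.
have intA' := interchangeable_swap sGG.1 intA.
have [h1 [O1 sink_bd sink_ac]] :=
  two_switch_sinks sGG Oh intA' hd (orientation_recurrent Oh C2 dc2).
have [h' O'] := orientation_two_switch sGG intA' O1 sink_bd sink_ac.
by exists h'; apply: eq_orientation O'; apply: two_switch_swap sGG.1 intA.
Qed.
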